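(* Let $B$ be a commutative ring with identity and $A$ a dense subring of $B$. If $P,Q$ are prime ideals of $B$ with $P\cap A\subseteq Q\cap A$, then $P\subseteq Q$.
   Context: All rings are commutative with identity; subrings contain the identity. A subring $A$ of $B$ is dense in $B$ if for every ideal $I$ of $B$ and every $b\in B\setminus \operatorname{rad}(I)$ there exists $a\in B\setminus\operatorname{rad}(I)$ with $ab\in A$. *)

From mathcomp Require Import all_boot all_algebra.
Set Implicit Arguments. Unset Strict Implicit. Unset Printing Implicit Defensive.
Import GRing.Theory.
Local Open Scope ring_scope.

Section Defs.
Variable B : comPzRingType.

Definition is_subring (A : B -> Prop) : Prop :=
  [/\ A 1, (forall x y, A x -> A y -> A (x - y)) &
           (forall x y, A x -> A y -> A (x * y))].

Definition is_ideal (I : B -> Prop) : Prop :=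
  [/\ I 0, (forall x y, I x -> I y -> I (x + y)) &
           (forall r x, I x -> I (r * x))].

Definition rad (I : B -> Prop) : B -> Prop :=
  fun b => exists n : nat, I (b ^+ n).

Definition is_prime_ideal (P : B -> Prop) : Prop :=
  [/\ is_ideal P, ~ P 1 & (forall x y, P (x * y) -> P x \/ P y)].

Definition dense_subring (A : B -> Prop) : Prop :=
  forall I : B -> Prop, is_ideal I ->
    forall b, ~ rad I b -> exists a, ~ rad I a /\ A (a * b).
End Defs.

From Pilot Require Import Defs.
From mathcomp Require Import all_boot all_algebra.
From Stdlib Require Import Classical.
Set Implicit Arguments. Unset Strict Implicit.
Import GRing.Theory.
Local Open Scope ring_scope.

(* If x lies in P but not in Q, density applied to the ideal Q (whose radical
   is Q itself) yields a outside Q with a x in A; then a x lies in P and A,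
   hence in Q, and primality of Q puts a or x in Q. *)

Section PrimeIdealRadical.

Variables (B : comPzRingType) (Q : B -> Prop).

Lemma rad_sub (b : B) : Q b -> Defs.rad Q b.
Proof. by exists 1%N; rewrite expr1. Qed.

Lemma prime_ideal_rad_sub : is_prime_ideal Q -> forall b : B, Defs.rad Q b -> Q b.
Proof.
move=> [_ nQ1 Qmul] b [n]; elim: n => [|n IHn]; first by rewrite expr0.
by rewrite exprS => /Qmul [].
Qed.

End PrimeIdealRadical.

Theorem lemma3p5 (B : comPzRingType) (A P Q : B -> Prop) :
  is_subring A -> dense_subring A ->
  is_prime_ideal P -> is_prime_ideal Q ->
  (forall x, P x /\ A x -> Q x /\ A x) ->
  forall x, P x -> Q x.
Proof.
move=> _ denseA [[_ _ Pmul] _ _] primeQ PAsubQA x Px.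
apply: NNPP => nQx.
have [idealQ _ Qmul] := primeQ.
have [a [nrad_a Aax]] : exists a, ~ Defs.rad Q a /\ A (a * x).
  by apply: denseA => // /(prime_ideal_rad_sub primeQ).
have [Qax _] := PAsubQA _ (conj (Pmul a x Px) Aax).
by case: (Qmul _ _ Qax) => // /rad_sub.
Qed.
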